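(* Assume the block-sparse setting described in the context, with adversarial noise satisfying $\|w\|_2\le\varepsilon$ for a known constant $\varepsilon>0$, and assume $x\neq 0$. Suppose that $$(1-(d-1)\nu)\,x_{\min} > 2\varepsilon\sqrt{1+(d-1)\nu} + (2k-1)\,d\,\mu_B\,x_{\min}.$$ Then the BOMP algorithm selects all elements of $S=\mathrm{supp}(x)$ among its chosen indices $\{i_1,\dots,i_k\}$, and its output satisfies $$\|\hat x_{\mathrm{BOMP}}-x\|_2^2 \le \frac{\varepsilon^2}{1-(d-1)\nu-(k-1)d\mu_B}.$$
   Context: Setting: $N=Md$. For $v\in\mathbb{C}^N$, $v[i]=(v_{(i-1)d+1},\dots,v_{id})^T$ is its $i$-th block ($1\le i\le M$); for a matrix $A$ with $N$ columns, $A[i]$ is the submatrix of columns $(i-1)d+1,\dots,id$. The (block) support is $\mathrm{supp}(v)=\{i: v[i]\neq 0\}$. For an index set $I=\{i_1<\dots<i_p\}$, $v_I$ is the concatenation of the blocks $v[i_1],\dots,v[i_p]$ and $A_I=[A[i_1],\dots,A[i_p]]$. The unknown deterministic vector $x\in\mathbb{C}^N$ has at most $k$ nonzero blocks (with $k$ known); $S=\mathrm{supp}(x)$, $s=|S|$, $x_{\max}=\max_{i\in S}\|x[i]\|_2$, $x_{\min}=\min_{i\in S}\|x[i]\|_2$. Observations are $y=Dx+w$ where $D\in\mathbb{C}^{L\times N}$ is known with columns $d_1,\dots,d_N$ of unit $\ell_2$ norm, $L<N$, and $D_I$ has full column rank for every index set $I$ with $|I|\le k$. Block coherence: $\mu_B=\max_{i\neq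 j}\frac1d\|D[i]^*D[j]\|$ (spectral norm). Sub-coherence: $\nu=\max_{1\le \ell\le M}\max_{(\ell-1)d+1\le i\neq j\le \ell d}|d_i^*d_j|$. BOMP algorithm: set $r^0=y$. For $\ell=1,\dots,k$: choose $i_\ell\in\arg\max_{i}\|D[i]^*r^{\ell-1}\|_2$ (ties broken arbitrarily); let $x^\ell$ be a minimizer of $\|y-D\tilde x\|_2$ over $\tilde x$ with $\mathrm{supp}(\tilde x)\subseteq\{i_1,\dots,i_\ell\}$; set $r^\ell=y-Dx^\ell$. Output $\hat x_{\mathrm{BOMP}}=x^k$. *)

(* The complex field is abstracted as any
   C : numClosedFieldType (algebraically closed field with conjugation
   and order/norm, e.g. algC). *)
From HB Require Import structures.
From mathcomp Require Import all_boot all_order all_algebra all_field.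
Set Implicit Arguments. Unset Strict Implicit. Unset Printing Implicit Defensive.
Import Order.TTheory GRing.Theory Num.Theory.
Local Open Scope ring_scope.

Definition adj (C : numClosedFieldType) m n (A : 'M[C]_(m, n)) : 'M[C]_(n, m) :=
  (map_mx (fun z => z^*) A)^T.

Definition norm2sq (C : numClosedFieldType) n (v : 'cV[C]_n) : C :=
  \sum_(j < n) `|v j 0| ^+ 2.
Definition norm2 (C : numClosedFieldType) n (v : 'cV[C]_n) : C :=
  sqrtC (norm2sq v).

(* A vector of C^N, N = M d, is represented by its M blocks of size d;
   the dictionary D (L x N) by its M column blocks D[i] (L x d). *)
Definition bvec (C : numClosedFieldType) M d := 'I_M -> 'cV[C]_d.
Definition bdict (C : numClosedFieldType) L M d := 'I_M -> 'M[C]_(L, d).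

Definition bmul (C : numClosedFieldType) L M d (D : bdict C L M d)
  (x : bvec C M d) : 'cV[C]_L := \sum_(i < M) D i *m x i.

Definition bsub (C : numClosedFieldType) M d (x z : bvec C M d) : bvec C M d :=
  fun i => x i - z i.

Definition bsupp (C : numClosedFieldType) M d (x : bvec C M d) : {set 'I_M} :=
  [set i | x i != 0].

Definition bnorm2sq (C : numClosedFieldType) M d (x : bvec C M d) : C :=
  \sum_(i < M) norm2sq (x i).

Definition is_spec_norm (C : numClosedFieldType) m n (A : 'M[C]_(m, n)) (s : C) :=
  (forall v : 'cV[C]_n, norm2 (A *m v) <= s * norm2 v) /\
  (exists v : 'cV[C]_n, norm2 v = 1 /\ norm2 (A *m v) = s).

Definition is_block_coherence (C : numClosedFieldType) L M d
  (D : bdict C L M d) (mu : C) :=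
  exists sn : 'I_M -> 'I_M -> C,
    (forall i j, is_spec_norm (adj (D i) *m D j) (sn i j)) /\
    mu = \big[Num.max/0]_(i < M) \big[Num.max/0]_(j < M | i != j) (sn i j / d%:R).

(* sub-coherence: max over blocks l and distinct columns i <> j of block l
   of |d_i^* d_j| (0 if there is no such pair) *)
Definition subcoherence (C : numClosedFieldType) L M d (D : bdict C L M d) : C :=
  \big[Num.max/0]_(l < M) \big[Num.max/0]_(i < d) \big[Num.max/0]_(j < d | i != j)
     `|(adj (col i (D l)) *m col j (D l)) 0 0|.

Definition is_min_block_norm (C : numClosedFieldType) M d (x : bvec C M d) (xmin : C) :=
  (exists2 i, i \in bsupp x & xmin = norm2 (x i)) /\
  (forall i, i \in bsupp x -> xmin <= norm2 (x i)).

Definition chosen M (sel : nat -> 'I_M) (l : nat) : {set 'I_M} :=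
  [set i | has (fun j => sel j == i) (iota 0 l)].

(* A run of BOMP for k iterations on data (D, y): sel l is the index i_{l+1}
   chosen at iteration l+1, xs l is the iterate x^l (xs 0 = 0, so r^0 = y),
   residual r^l = y - D x^l.  Ties and non-unique least-squares minimizers
   are allowed arbitrarily.  The output is xs k. *)
Definition BOMP_run (C : numClosedFieldType) L M d (D : bdict C L M d)
  (y : 'cV[C]_L) (k : nat) (sel : nat -> 'I_M) (xs : nat -> bvec C M d) :=
  (forall i, xs 0%N i = 0) /\
  forall l, (l < k)%N ->
    let r := y - bmul D (xs l) in
    (forall i, norm2 (adj (D i) *m r) <= norm2 (adj (D (sel l)) *m r)) /\
    bsupp (xs l.+1) \subset chosen sel l.+1 /\
    (forall z : bvec C M d, bsupp z \subset chosen sel l.+1 ->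
       norm2 (y - bmul D (xs l.+1)) <= norm2 (y - bmul D z)).

From HB Require Import structures.
From mathcomp Require Import all_boot all_order all_algebra all_field.
From mathcomp Require Import ring.
Import Order.TTheory GRing.Theory Num.Theory.
Local Open Scope ring_scope.
Set Implicit Arguments. Unset Strict Implicit. Unset Printing Implicit Defensive.

(* At step [l] the residual is [D u + w] with [u = x - x^l] supported on [S].
   Let [i0] maximise [||u[i]||]; while some block [j0] of [S] is still
   unchosen, [u[j0] = x[j0]], so [||u[i0]|| >= xmin].  Block coherence bounds
   the leakage between distinct blocks, and sub-coherence bounds the Gram
   matrix of each single block (Gershgorin).  Hence, with
   [kappa = sqrt(1 + (d-1) nu)], the correlation [||D[i]^* r||] is at most
   [d mu k ||u[i0]|| + kappa eps] off [S] and at least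
   [(1 - (d-1) nu - (k-1) d mu) ||u[i0]|| - kappa eps] at [i0]; the hypothesis
   makes the latter larger, so BOMP picks a block of [S].  That block is new,
   since least squares makes the residual orthogonal to every chosen block.
   After [k] steps [S] is covered and the residual is orthogonal to
   [D (x^k - x)], so [||D (x^k - x)||^2 <= ||w||^2 <= eps^2]; the same
   Gershgorin/coherence estimate bounds [||D e||^2] from below on
   block-[k]-sparse [e], which gives the error bound. *)

Section InnerProduct.
Variable C : numClosedFieldType.

Definition dot n (a b : 'cV[C]_n) : C := \sum_(j < n) (a j 0)^* * b j 0.

Lemma adjE m n (A : 'M[C]_(m, n)) i j : adj A i j = (A j i)^*.
Proof. by rewrite /adj !mxE. Qed.

Lemma adj_mulmx_dot n (a b : 'cV[C]_n) : (adj a *m b) 0 0 = dot a b.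
Proof. by rewrite mxE; apply: eq_bigr => j _; rewrite adjE. Qed.

Lemma adj_mulmx_col m n (A : 'M[C]_(m, n)) a b :
  (adj A *m A) a b = dot (col a A) (col b A).
Proof. by rewrite mxE; apply: eq_bigr => i _; rewrite adjE !mxE. Qed.

Lemma dotvv n (a : 'cV[C]_n) : dot a a = norm2sq a.
Proof. by apply: eq_bigr => j _; rewrite normCKC. Qed.

Lemma norm2sq_ge0 n (a : 'cV[C]_n) : 0 <= norm2sq a.
Proof. by apply: sumr_ge0 => j _; rewrite exprn_ge0. Qed.

Lemma norm2_ge0 n (a : 'cV[C]_n) : 0 <= norm2 a.
Proof. by rewrite sqrtC_ge0 norm2sq_ge0. Qed.

Lemma norm2_sqr n (a : 'cV[C]_n) : norm2 a ^+ 2 = norm2sq a.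
Proof. exact: sqrtCK. Qed.

Lemma norm2sq_eq0 n (a : 'cV[C]_n) : norm2sq a = 0 -> a = 0.
Proof.
move/eqP; rewrite psumr_eq0 => [/allP a0|j _]; last exact: exprn_ge0.
apply/matrixP => i j; rewrite ord1 mxE; apply/eqP.
by have := a0 i (mem_index_enum _); rewrite expf_eq0 normr_eq0.
Qed.

Lemma norm2_eq0 n (a : 'cV[C]_n) : norm2 a = 0 -> a = 0.
Proof. by move/eqP; rewrite sqrtC_eq0 => /eqP/norm2sq_eq0. Qed.

Lemma norm2_0 n : norm2 (0 : 'cV[C]_n) = 0.
Proof. by rewrite /norm2 /norm2sq big1 ?sqrtC0 // => j _; rewrite mxE normr0 expr0n. Qed.

Lemma dotDr n (a b c : 'cV[C]_n) : dot a (b + c) = dot a b + dot a c.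
Proof. by rewrite /dot -big_split; apply: eq_bigr => j _; rewrite mxE mulrDr. Qed.

Lemma dotZr n (a b : 'cV[C]_n) t : dot a (t *: b) = t * dot a b.
Proof. by rewrite /dot mulr_sumr; apply: eq_bigr => j _; rewrite mxE mulrCA. Qed.

Lemma dot_sumr n I (r : seq I) (P : pred I) (a : 'cV[C]_n) (F : I -> 'cV[C]_n) :
  dot a (\sum_(i <- r | P i) F i) = \sum_(i <- r | P i) dot a (F i).
Proof. by rewrite /dot exchange_big; apply: eq_bigr => j _; rewrite summxE mulr_sumr. Qed.

Lemma dotC n (a b : 'cV[C]_n) : dot b a = (dot a b)^*.
Proof.
by rewrite /dot rmorph_sum; apply: eq_bigr => j _; rewrite rmorphM /= conjCK mulrC.
Qed.

Lemma dotDl n (a b c : 'cV[C]_n) : dot (b + c) a = dot b a + dot c a.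
Proof. by rewrite dotC dotDr rmorphD /= -!dotC. Qed.

Lemma dotZl n (a b : 'cV[C]_n) t : dot (t *: b) a = t^* * dot b a.
Proof. by rewrite dotC dotZr rmorphM /= -dotC. Qed.

Lemma dot_suml n I (r : seq I) (P : pred I) (a : 'cV[C]_n) (F : I -> 'cV[C]_n) :
  dot (\sum_(i <- r | P i) F i) a = \sum_(i <- r | P i) dot (F i) a.
Proof. by rewrite dotC dot_sumr rmorph_sum; apply: eq_bigr => i _; rewrite /= -dotC. Qed.

Lemma dot_adjr m n (A : 'M[C]_(m, n)) a b : dot a (adj A *m b) = dot (A *m a) b.
Proof.
rewrite /dot; under eq_bigr => j _ do rewrite mxE mulr_sumr.
rewrite exchange_big; apply: eq_bigr => i _.
rewrite mxE rmorph_sum mulr_suml; apply: eq_bigr => j _.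
by rewrite adjE rmorphM /= mulrCA mulrA.
Qed.

Lemma norm2sqD_orth n (a b : 'cV[C]_n) :
  dot a b = 0 -> norm2sq (a + b) = norm2sq a + norm2sq b.
Proof.
move=> ab0; rewrite -!dotvv dotDl !dotDr ab0 (dotC a b) ab0 rmorph0.
by rewrite addr0 add0r.
Qed.

Lemma real_cauchy_schwarz (I : finType) (p q : I -> C) :
  (forall i, p i \is Num.real) -> (forall i, q i \is Num.real) ->
  (\sum_i p i * q i) ^+ 2 <= (\sum_i p i ^+ 2) * (\sum_i q i ^+ 2).
Proof.
move=> pR qR.
have -> : (\sum_i p i * q i) ^+ 2 = \sum_i \sum_j (p i * q j) * (p j * q i).
  rewrite expr2 mulr_suml; apply: eq_bigr => i _.
  by rewrite mulr_sumr; apply: eq_bigr => j _; ring.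
have -> : (\sum_i p i ^+ 2) * (\sum_i q i ^+ 2) = \sum_i \sum_j (p i * q j) ^+ 2.
  rewrite mulr_suml; apply: eq_bigr => i _.
  by rewrite mulr_sumr; apply: eq_bigr => j _; ring.
rewrite -(ler_pMn2r (n := 2)) // [X in _ <= X]mulr2n [X in _ <= _ + X]exchange_big.
rewrite -big_split -!sumrMnl; apply: ler_sum => i _.
rewrite -big_split -sumrMnl; apply: ler_sum => j _.
by apply: real_leif_mean_square_scaled; rewrite rpredM.
Qed.

Lemma normr_dot_le n (a b : 'cV[C]_n) : `|dot a b| <= norm2 a * norm2 b.
Proof.
apply: le_trans (ler_norm_sum _ _ _) _; under eq_bigr do rewrite normrM norm_conjC.
have sum_ge0 : 0 <= \sum_i `|a i 0| * `|b i 0| by rewrite sumr_ge0 // => i _; rewrite mulr_ge0.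
rewrite -ler_sqr ?nnegrE ?mulr_ge0 ?norm2_ge0 // exprMn !norm2_sqr.
by apply: real_cauchy_schwarz => i; rewrite normr_real.
Qed.

End InnerProduct.

Section RealOrder.
Variable C : numClosedFieldType.

Lemma max_nneg (a b : C) : 0 <= a -> 0 <= b ->
  [/\ 0 <= Num.max a b, a <= Num.max a b & b <= Num.max a b].
Proof.
by move=> a0 b0; case: (real_leP (ger0_real a0) (ger0_real b0)) => [|/ltW] ab.
Qed.

Lemma bigmax_nneg_seq (I : eqType) (r : seq I) (P : pred I) (F : I -> C) :
  (forall i, P i -> 0 <= F i) ->
  0 <= \big[Num.max/0]_(i <- r | P i) F i /\
  forall i, i \in r -> P i -> F i <= \big[Num.max/0]_(i <- r | P i) F i.
Proof.
move=> F0; elim: r => [|j r [IH0 IHle]]; first by rewrite big_nil.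
rewrite big_cons; case: ifP => Pj; last first.
  by split=> // i; rewrite inE => /predU1P [->|]; [rewrite Pj | exact: IHle].
have [m0 mj mr] := max_nneg (F0 j Pj) IH0.
by split=> // i; rewrite inE => /predU1P [->|/IHle ri /ri/le_trans]; last exact.
Qed.

Lemma bigmax_nneg_ge0 (I : finType) (P : pred I) (F : I -> C) :
  (forall i, P i -> 0 <= F i) -> 0 <= \big[Num.max/0]_(i | P i) F i.
Proof. by move=> /(bigmax_nneg_seq (index_enum I))[]. Qed.

Lemma le_bigmax_nneg (I : finType) (P : pred I) (F : I -> C) i :
  (forall i, P i -> 0 <= F i) -> P i -> F i <= \big[Num.max/0]_(i | P i) F i.
Proof. by move=> /(bigmax_nneg_seq (index_enum I))[_]; apply; rewrite mem_index_enum. Qed.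

Lemma exists_argmax_seq (I : eqType) (f : I -> C) (i0 : I) (s : seq I) :
  (forall i, f i \is Num.real) ->
  exists2 a, a \in i0 :: s & forall b, b \in i0 :: s -> f b <= f a.
Proof.
move=> fR; elim: s i0 => [|j s IH] i0.
  by exists i0 => [|b]; rewrite inE // => /eqP->.
have [a sa amax] := IH j; case: (real_leP (fR i0) (fR a)) => [i0a|/ltW ai0].
  exists a => [|b]; first by rewrite inE sa orbT.
  by rewrite inE => /predU1P [->|/amax].
exists i0 => [|b]; first exact: mem_head.
by rewrite inE => /predU1P [->//|/amax/le_trans]; apply.
Qed.

Lemma exists_argmax (I : finType) (A : {set I}) (f : I -> C) (i0 : I) :
  i0 \in A -> (forall i, f i \is Num.real) ->
  exists2 a, a \in A & forall b, b \in A -> f b <= f a.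
Proof.
move=> Ai0 fR; have := mem_enum A i0; rewrite Ai0.
case: (enum A) (mem_enum A) => [//|j s] memA _.
have [a] := exists_argmax_seq j s fR; rewrite memA => Aa amax.
by exists a => // b; rewrite -memA; apply: amax.
Qed.

Lemma sum_offdiag_le (I : finType) (A : {set I}) (p : I -> C) :
  (forall i, 0 <= p i) -> (forall i, i \notin A -> p i = 0) ->
  \sum_i \sum_(j | j != i) p i * p j <= (#|A|%:R - 1) * \sum_i p i ^+ 2.
Proof.
move=> p0 pA.
have -> : \sum_i \sum_(j | j != i) p i * p j = (\sum_i p i) ^+ 2 - \sum_i p i ^+ 2.
  rewrite expr2 mulr_suml -sumrB; apply: eq_bigr => i _.
  by rewrite mulr_sumr [X in _ = X - _](bigD1 i) //= -expr2 addrC addrK.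
rewrite mulrBl mul1r lerD2r.
have indE : \sum_i p i * (i \in A)%:R = \sum_i p i.
  by apply: eq_bigr => i _; case: (boolP (i \in A)) => [_|/pA ->]; rewrite ?mulr1 ?mul0r.
have ind2E : \sum_i ((i \in A)%:R) ^+ 2 = #|A|%:R :> C.
  rewrite (bigID (mem A)) /= [X in _ + X]big1 => [|i /negbTE->]; last by rewrite expr0n.
  by rewrite addr0 (eq_bigr (fun _ => 1)) => [|i ->]; rewrite ?sumr_const ?expr1n.
rewrite mulrC -indE -ind2E; apply: real_cauchy_schwarz => i; first exact: ger0_real.
exact: realn.
Qed.

Lemma ler_of_sqr_le_mul (a b : C) :
  0 <= a -> 0 <= b -> a ^+ 2 <= a * b -> a <= b.
Proof.
move=> a0 b0; have [->//|a_neq0] := eqVneq a 0.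
by rewrite expr2 ler_pM2l // lt_def a_neq0.
Qed.

End RealOrder.

Section LeastSquares.
Variable C : numClosedFieldType.

Lemma min_norm_orth n (r a : 'cV[C]_n) :
  (forall t : C, norm2 r <= norm2 (r + t *: a)) -> dot a r = 0.
Proof.
move=> rmin; have [->|a0] := eqVneq a 0.
  by rewrite /dot big1 // => j _; rewrite mxE rmorph0 mul0r.
set c := dot a r; set na := norm2sq a.
have na_gt0 : 0 < na.
  by rewrite lt_def norm2sq_ge0 andbT; apply: contra a0 => /eqP/norm2sq_eq0->.
have na_conj : na^* = na by rewrite geC0_conj // ltW.
have stepE : norm2sq (r + (- (c / na)) *: a) = norm2sq r - `|c| ^+ 2 / na.
  rewrite -!dotvv dotDl !dotDr !dotZl !dotZr [dot a a]dotvv -/na (dotC a r) -/c.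
  rewrite !rmorphN rmorphM fmorphV /= na_conj normCK.
  by move: na_gt0; clearbody c na => /lt0r_neq0 ?; field.
have : norm2sq r <= norm2sq r - `|c| ^+ 2 / na.
  by rewrite -stepE -!norm2_sqr ler_sqr ?nnegrE ?norm2_ge0.
rewrite lerDl oppr_ge0 pmulr_lle0 ?invr_gt0 // => c2.
by apply/eqP; rewrite -normr_eq0 -sqrf_eq0 eq_le c2 exprn_ge0.
Qed.

End LeastSquares.

Lemma gram_deviation (C : numClosedFieldType) m d (B : 'M[C]_(m, d)) (nu : C) v :
  0 <= nu -> (forall a, norm2sq (col a B) = 1) ->
  (forall a b, a != b -> `|dot (col a B) (col b B)| <= nu) ->
  `|norm2sq (B *m v) - norm2sq v| <= (d%:R - 1) * nu * norm2sq v.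
Proof.
move=> nu0 unit_cols offdiag_le.
have -> : norm2sq (B *m v) - norm2sq v =
    \sum_a \sum_(b | b != a) (v a 0)^* * dot (col a B) (col b B) * v b 0.
  rewrite -dotvv -dot_adjr mulmxA /norm2sq -sumrB; apply: eq_bigr => a _.
  rewrite mxE mulr_sumr (bigD1 a) //= adj_mulmx_col dotvv unit_cols mul1r -normCKC.
  by rewrite addrAC subrr add0r; apply: eq_bigr => b _; rewrite adj_mulmx_col mulrA.
apply: le_trans (ler_norm_sum _ _ _) _.
apply: (@le_trans _ _ (nu * \sum_a \sum_(b | b != a) `|v a 0| * `|v b 0|)).
  rewrite mulr_sumr; apply: ler_sum => a _; apply: le_trans (ler_norm_sum _ _ _) _.
  rewrite mulr_sumr; apply: ler_sum => b ba.
  rewrite !normrM norm_conjC mulrAC [X in _ <= X]mulrC ler_wpM2l ?mulr_ge0 //.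
  by apply: offdiag_le; rewrite eq_sym.
rewrite mulrAC [X in _ <= X]mulrC ler_wpM2l //.
have := sum_offdiag_le (A := [set: 'I_d]) (fun a => normr_ge0 (v a 0)).
by rewrite cardsT card_ord; apply => a; rewrite inE.
Qed.

Lemma spec_norm_ge0 (C : numClosedFieldType) m n (A : 'M[C]_(m, n)) s :
  is_spec_norm A s -> 0 <= s.
Proof. by move=> [_ [v [_ <-]]]; apply: norm2_ge0. Qed.

Section BlockVectors.
Variables (C : numClosedFieldType) (L M d : nat).
Implicit Types (x z : bvec C M d) (T : {set 'I_M}).

Lemma subset_bsuppP x T : reflect (forall i, i \notin T -> x i = 0) (bsupp x \subset T).
Proof.
apply: (iffP subsetP) => [xT i|x0 i]; first by apply: contraNeq => xi; apply: xT; rewrite inE.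
by rewrite inE; apply: contraR => /x0->.
Qed.

Lemma bsupp_subB x z T :
  bsupp x \subset T -> bsupp z \subset T -> bsupp (fun i => x i - z i) \subset T.
Proof. by move=> /subset_bsuppP xT /subset_bsuppP zT; apply/subset_bsuppP => i iT; rewrite xT ?zT ?subr0. Qed.

Lemma bsupp_subZ x T t : bsupp x \subset T -> bsupp (fun i => t *: x i) \subset T.
Proof. by move=> /subset_bsuppP xT; apply/subset_bsuppP => i iT; rewrite xT ?scaler0. Qed.

Variable D : bdict C L M d.

Lemma bmulB x z : bmul D (fun i => x i - z i) = bmul D x - bmul D z.
Proof. by rewrite /bmul -sumrB; apply: eq_bigr => i _; rewrite mulmxBr. Qed.

Lemma bmulZ x t : bmul D (fun i => t *: x i) = t *: bmul D x.
Proof. by rewrite /bmul scaler_sumr; apply: eq_bigr => i _; rewrite scalemxAr. Qed.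

Lemma bmul_delta i (v : 'cV[C]_d) : bmul D (fun j => if j == i then v else 0) = D i *m v.
Proof. by rewrite /bmul (bigD1 i) //= eqxx big1 ?addr0 // => j /negbTE->; rewrite mulmx0. Qed.

End BlockVectors.

Section Chosen.
Variables (M : nat) (sel : nat -> 'I_M).

Lemma chosen0 : chosen sel 0 = set0.
Proof. by apply/setP => i; rewrite !inE. Qed.

Lemma chosenS l : chosen sel l.+1 = sel l |: chosen sel l.
Proof. by apply/setP => i; rewrite !inE -addn1 iotaD has_cat /= orbF orbC eq_sym. Qed.

Lemma chosen_subS l : chosen sel l \subset chosen sel l.+1.
Proof. by rewrite chosenS subsetU1. Qed.

Lemma card_chosen l : (#|chosen sel l| <= l)%N.
Proof.
elim: l => [|l IH]; first by rewrite chosen0 cards0.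
by rewrite chosenS cardsU1 -add1n leq_add ?leq_b1.
Qed.

End Chosen.

Section Coherence.
Variables (C : numClosedFieldType) (L M d : nat) (D : bdict C L M d).
Local Notation nu := (subcoherence D).

Lemma subcoherence_ge0 : 0 <= nu.
Proof. by do 3!(apply: bigmax_nneg_ge0 => * //). Qed.

Lemma subcoherence_ub l a b : a != b -> `|dot (col a (D l)) (col b (D l))| <= nu.
Proof.
move=> ab; rewrite -adj_mulmx_dot.
apply: le_trans (le_bigmax_nneg _ (P := xpredT) _) => [||//]; last first.
  by move=> *; do 2!(apply: bigmax_nneg_ge0 => * //).
apply: le_trans (le_bigmax_nneg _ (P := xpredT) _) => [||//]; last first.
  by move=> *; apply: bigmax_nneg_ge0 => * //.
exact: (le_bigmax_nneg (P := fun j => a != j)).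
Qed.

Hypothesis d_gt0 : (0 < d)%N.
Hypothesis unit_cols : forall (l : 'I_M) (j : 'I_d), norm2 (col j (D l)) = 1.

Lemma block_gram_deviation l v :
  `|norm2sq (D l *m v) - norm2sq v| <= (d - 1)%N%:R * nu * norm2sq v.
Proof.
rewrite natrB //; apply: gram_deviation subcoherence_ge0 _ (@subcoherence_ub l).
by move=> a; rewrite -norm2_sqr unit_cols expr1n.
Qed.

Local Notation kappa := (sqrtC (1 + (d - 1)%N%:R * nu)).

Lemma sqrt_gram_bound_ge0 : 0 <= kappa.
Proof. by rewrite sqrtC_ge0 addr_ge0 ?mulr_ge0 ?subcoherence_ge0. Qed.

Lemma norm2sq_block_ge l v : (1 - (d - 1)%N%:R * nu) * norm2sq v <= norm2sq (D l *m v).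
Proof.
have := block_gram_deviation l v.
rewrite real_ler_norml ?rpredB ?ger0_real ?norm2sq_ge0 // lerBrDr => /andP[lo _].
by rewrite mulrBl mul1r addrC.
Qed.

Lemma norm2_block_le l v : norm2 (D l *m v) <= kappa * norm2 v.
Proof.
have := block_gram_deviation l v.
rewrite real_ler_norml ?rpredB ?ger0_real ?norm2sq_ge0 // lerBlDr => /andP[_ hi].
rewrite -ler_sqr ?nnegrE ?mulr_ge0 ?norm2_ge0 ?sqrt_gram_bound_ge0 // exprMn !norm2_sqr sqrtCK.
by rewrite mulrDl mul1r addrC.
Qed.

Lemma normr_dot_noise l v (z : 'cV[C]_L) :
  `|dot (D l *m v) z| <= norm2 v * (kappa * norm2 z).
Proof.
apply: le_trans (normr_dot_le _ _) _; rewrite mulrA [norm2 v * _]mulrC.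
by rewrite ler_wpM2r ?norm2_ge0 ?norm2_block_le.
Qed.

Variable mu : C.
Hypothesis coh : is_block_coherence D mu.

Lemma block_coherence_ge0 : 0 <= mu.
Proof.
have [sn [sn_norm ->]] := coh; do 2!(apply: bigmax_nneg_ge0 => * //).
by rewrite divr_ge0 ?(spec_norm_ge0 (sn_norm _ _)).
Qed.

Let dmu_ge0 : 0 <= d%:R * mu.
Proof. by rewrite mulr_ge0 ?block_coherence_ge0. Qed.

Lemma cross_block_le i j v : i != j ->
  norm2 (adj (D i) *m (D j *m v)) <= d%:R * mu * norm2 v.
Proof.
move=> ij; have [sn [sn_norm mu_def]] := coh.
rewrite mulmxA; apply: le_trans ((sn_norm i j).1 v) _; rewrite ler_wpM2r ?norm2_ge0 //.
rewrite mu_def mulrC -ler_pdivrMr ?ltr0n //.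
have sn_d_ge0 i' j' : 0 <= sn i' j' / d%:R by rewrite divr_ge0 ?(spec_norm_ge0 (sn_norm _ _)).
apply: le_trans (le_bigmax_nneg (F := fun j' => sn i j' / d%:R) (fun j' _ => sn_d_ge0 i j') ij) _.
apply: (le_bigmax_nneg (F := fun i' => \big[Num.max/0]_(j' < M | i' != j') (sn i' j' / d%:R)))
  => // i' _; exact: bigmax_nneg_ge0.
Qed.

Lemma normr_dot_cross i j v z : i != j ->
  `|dot v (adj (D i) *m (D j *m z))| <= norm2 v * (d%:R * mu * norm2 z).
Proof.
move=> ij; apply: le_trans (normr_dot_le _ _) _.
by rewrite ler_wpM2l ?norm2_ge0 ?cross_block_le.
Qed.

Lemma block_sparse_norm2sq_ge k (T : {set 'I_M}) (e : bvec C M d) :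
  (#|T| <= k)%N -> bsupp e \subset T ->
  (1 - (d - 1)%N%:R * nu - (k%:R - 1) * (d%:R * mu)) * bnorm2sq e <= norm2sq (bmul D e).
Proof.
move=> Tk /subset_bsuppP eT.
set Off := \sum_i \sum_(j | j != i) dot (D i *m e i) (D j *m e j).
have split_diag : norm2sq (bmul D e) = \sum_i norm2sq (D i *m e i) + Off.
  rewrite -dotvv dot_suml -big_split; apply: eq_bigr => i _.
  by rewrite dot_sumr (bigD1 i) //= dotvv.
have diag_ge : (1 - (d - 1)%N%:R * nu) * bnorm2sq e <= \sum_i norm2sq (D i *m e i).
  by rewrite mulr_sumr; apply: ler_sum => i _; apply: norm2sq_block_ge.
have off_le : `|Off| <= d%:R * mu * ((k%:R - 1) * bnorm2sq e).
  apply: le_trans (ler_norm_sum _ _ _) _.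
  apply: (@le_trans _ _ (d%:R * mu * \sum_i \sum_(j | j != i) norm2 (e i) * norm2 (e j))).
    rewrite mulr_sumr; apply: ler_sum => i _; apply: le_trans (ler_norm_sum _ _ _) _.
    rewrite mulr_sumr; apply: ler_sum => j ji; rewrite -dot_adjr mulrCA.
    by apply: normr_dot_cross; rewrite // eq_sym.
  rewrite ler_wpM2l //.
  apply: le_trans (sum_offdiag_le (A := T) (p := fun i => norm2 (e i)) (fun i => norm2_ge0 _) _) _.
    by move=> i /eT->; rewrite norm2_0.
  rewrite /bnorm2sq; under [X in _ <= _ * X]eq_bigr do rewrite -norm2_sqr.
  by rewrite ler_wpM2r ?sumr_ge0 ?lerB ?ler_nat // => i _; rewrite exprn_ge0 ?norm2_ge0.
have off_real : Off \is Num.real.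
  have -> : Off = norm2sq (bmul D e) - \sum_i norm2sq (D i *m e i) by rewrite split_diag addrC addKr.
  by rewrite rpredB ?ger0_real ?norm2sq_ge0 ?sumr_ge0 // => i _; apply: norm2sq_ge0.
rewrite split_diag mulrBl lerD //.
have -> : (k%:R - 1) * (d%:R * mu) * bnorm2sq e = d%:R * mu * ((k%:R - 1) * bnorm2sq e).
  by ring.
exact: real_lerNnormlW.
Qed.

Section Correlations.
Variables (k : nat) (eps : C) (S : {set 'I_M}) (u : bvec C M d) (w : 'cV[C]_L) (i0 : 'I_M).
Hypothesis S_card : (#|S| <= k)%N.
Hypothesis u_supp : bsupp u \subset S.
Hypothesis noise : norm2 w <= eps.
Hypothesis i0_max : forall j, norm2 (u j) <= norm2 (u i0).
Local Notation um := (norm2 (u i0)).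
Local Notation r := (bmul D u + w).

Let eps_ge0 : 0 <= eps.
Proof. exact: le_trans (norm2_ge0 w) noise. Qed.

Let noise_le l v : `|dot (D l *m v) w| <= norm2 v * (kappa * eps).
Proof.
apply: le_trans (normr_dot_noise _ _ _) _.
by rewrite ler_wpM2l ?norm2_ge0 // ler_wpM2l ?sqrt_gram_bound_ge0.
Qed.

Lemma sum_norm2_le : \sum_j norm2 (u j) <= k%:R * um.
Proof.
have /subset_bsuppP u0 := u_supp.
rewrite (bigID (mem S)) /= [X in _ + X]big1 ?addr0 => [|j /u0->]; last exact: norm2_0.
apply: le_trans (ler_sum _ (fun j _ => i0_max j)) _.
by rewrite sumr_const -[X in X <= _]mulr_natl ler_wpM2r ?norm2_ge0 ?ler_nat.
Qed.

Lemma sum_norm2_neq_le : \sum_(j | j != i0) norm2 (u j) <= (k%:R - 1) * um.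
Proof. by have := sum_norm2_le; rewrite (bigD1 i0) //= mulrBl mul1r lerBrDl addrC. Qed.

Lemma dot_residual z : dot z r = \sum_j dot z (D j *m u j) + dot z w.
Proof. by rewrite dotDr dot_sumr. Qed.

Lemma corr_off_support i : i \notin S ->
  norm2 (adj (D i) *m r) <= d%:R * mu * (k%:R * um) + kappa * eps.
Proof.
move=> iS; have /subset_bsuppP u0 := u_supp; set v := adj (D i) *m r.
have term_le j : `|dot (D i *m v) (D j *m u j)| <= norm2 v * (d%:R * mu * norm2 (u j)).
  rewrite -dot_adjr; apply: le_trans (normr_dot_le _ _) _; rewrite ler_wpM2l ?norm2_ge0 //.
  have [<-|ij] := eqVneq i j; last exact: cross_block_le.
  by rewrite u0 // !mulmx0 !norm2_0 mulr0.
have bound_ge0 : 0 <= d%:R * mu * (k%:R * um) + kappa * eps.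
  by rewrite addr_ge0 ?(mulr_ge0 dmu_ge0) ?mulr_ge0 ?norm2_ge0 ?sqrt_gram_bound_ge0.
apply: ler_of_sqr_le_mul (norm2_ge0 _) bound_ge0 _.
rewrite norm2_sqr -[norm2sq v]ger0_norm ?norm2sq_ge0 // -dotvv {2}/v dot_adjr dot_residual.
apply: le_trans (ler_normD _ _) _; rewrite mulrDr lerD ?noise_le //.
apply: le_trans (ler_norm_sum _ _ _) _; apply: le_trans (ler_sum _ (fun j _ => term_le j)) _.
by rewrite -mulr_sumr ler_wpM2l ?norm2_ge0 // -mulr_sumr ler_wpM2l ?sum_norm2_le.
Qed.

Lemma corr_at_max : 0 < um ->
  (1 - (d - 1)%N%:R * nu) * um - (d%:R * mu * ((k%:R - 1) * um) + kappa * eps)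
    <= norm2 (adj (D i0) *m r).
Proof.
move=> um_gt0; set v := adj (D i0) *m r.
set rest := \sum_(j | j != i0) dot (D i0 *m u i0) (D j *m u j) + dot (D i0 *m u i0) w.
have peakE : dot (u i0) v = norm2sq (D i0 *m u i0) + rest.
  by rewrite /v dot_adjr dot_residual (bigD1 i0) //= dotvv addrA.
have rest_le : `|rest| <= um * (d%:R * mu * ((k%:R - 1) * um) + kappa * eps).
  apply: le_trans (ler_normD _ _) _; rewrite mulrDr lerD ?noise_le //.
  apply: le_trans (ler_norm_sum _ _ _) _.
  apply: (@le_trans _ _ (\sum_(j | j != i0) um * (d%:R * mu * norm2 (u j)))).
    apply: ler_sum => j ji0; rewrite -dot_adjr; apply: le_trans (normr_dot_le _ _) _.
    by rewrite ler_wpM2l ?norm2_ge0 ?cross_block_le // eq_sym.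
  by rewrite -mulr_sumr ler_wpM2l ?norm2_ge0 // -mulr_sumr ler_wpM2l ?sum_norm2_neq_le.
have : um * ((1 - (d - 1)%N%:R * nu) * um - (d%:R * mu * ((k%:R - 1) * um) + kappa * eps))
    <= um * norm2 v.
  apply: le_trans (normr_dot_le (u i0) v); rewrite peakE.
  apply: le_trans (lerB_normD _ _); rewrite ger0_norm ?norm2sq_ge0 // mulrBr lerB //.
  by rewrite mulrCA -expr2 norm2_sqr norm2sq_block_ge.
by rewrite ler_pM2l.
Qed.

End Correlations.

End Coherence.

Section BOMPRun.
Variables (C : numClosedFieldType) (L M d k : nat) (D : bdict C L M d) (y : 'cV[C]_L).
Variables (sel : nat -> 'I_M) (xs : nat -> bvec C M d).
Hypothesis run : BOMP_run D y k sel xs.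
Local Notation res l := (y - bmul D (xs l)).

Lemma bomp_greedy l i : (l < k)%N ->
  norm2 (adj (D i) *m res l) <= norm2 (adj (D (sel l)) *m res l).
Proof. by move=> lk; have [greedy _] := run.2 l lk; apply: greedy. Qed.

Lemma bomp_supp l : (l <= k)%N -> bsupp (xs l) \subset chosen sel l.
Proof.
case: l => [_|l lk]; last by have [_ []] := run.2 l lk.
by apply/subset_bsuppP => i _; rewrite run.1.
Qed.

Lemma bomp_residual_orth l (e : bvec C M d) : (l < k)%N ->
  bsupp e \subset chosen sel l.+1 -> dot (bmul D e) (res l.+1) = 0.
Proof.
move=> lk eT; have [_ [xsT lsq]] := run.2 l lk.
apply: min_norm_orth => t.
apply: le_trans (lsq _ (bsupp_subB xsT (bsupp_subZ t eT))) _.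
by rewrite bmulB bmulZ opprB addrCA addrC.
Qed.

Lemma bomp_corr_chosen l i : (l <= k)%N -> i \in chosen sel l ->
  adj (D i) *m res l = 0.
Proof.
case: l => [_|l lk iT]; first by rewrite chosen0 inE.
set v := adj (D i) *m res l.+1.
have delta_supp : bsupp (fun j => if j == i then v else 0) \subset chosen sel l.+1.
  by apply/subset_bsuppP => j; case: eqP => [->|]; rewrite ?iT.
have := bomp_residual_orth lk delta_supp.
by rewrite bmul_delta -dot_adjr dotvv => /norm2sq_eq0.
Qed.

End BOMPRun.

Section BOMPRecovery.
Variables (C : numClosedFieldType) (L M d k : nat) (D : bdict C L M d).
Variables (x : bvec C M d) (w y : 'cV[C]_L) (eps mu xmin : C).
Hypothesis d_gt0 : (0 < d)%N.
Hypothesis unit_cols : forall (l : 'I_M) (j : 'I_d), norm2 (col j (D l)) = 1.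
Hypothesis sparse : (#|bsupp x| <= k)%N.
Hypothesis x_neq0 : exists i, x i != 0.
Hypothesis y_def : y = bmul D x + w.
Hypothesis noise : norm2 w <= eps.
Hypothesis coh : is_block_coherence D mu.
Hypothesis xmin_def : is_min_block_norm x xmin.
Local Notation nu := (subcoherence D).
Local Notation kappa := (sqrtC (1 + (d - 1)%N%:R * nu)).
Hypothesis cond : (1 - (d - 1)%N%:R * nu) * xmin >
  2 * eps * kappa + (2 * k - 1)%N%:R * d%:R * mu * xmin.
Variables (sel : nat -> 'I_M) (xs : nat -> bvec C M d).
Hypothesis run : BOMP_run D y k sel xs.
Local Notation S := (bsupp x).

Let gap := 1 - (d - 1)%N%:R * nu - (2 * k - 1)%N%:R * (d%:R * mu).

Let eps_ge0 : 0 <= eps.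
Proof. exact: le_trans (norm2_ge0 w) noise. Qed.

Let cmu_ge0 : 0 <= d%:R * mu.
Proof. by rewrite mulr_ge0 ?(block_coherence_ge0 coh). Qed.

Lemma k_gt0 : (0 < k)%N.
Proof.
have [i xi] := x_neq0; apply: leq_trans sparse; rewrite card_gt0.
by apply/set0Pn; exists i; rewrite inE.
Qed.

Lemma xmin_gt0 : 0 < xmin.
Proof.
have [[i xi ->] _] := xmin_def; rewrite lt_def norm2_ge0 andbT.
by apply: contraTneq xi => /norm2_eq0 xi0; rewrite inE xi0 eqxx.
Qed.

Let gap_xmin : 2 * eps * kappa < gap * xmin.
Proof. by rewrite /gap mulrBl ltrBrDr mulrA. Qed.

Let gap_gt0 : 0 < gap.
Proof.
have := le_lt_trans (mulr_ge0 (mulr_ge0 (ler0n _ 2) eps_ge0) (sqrt_gram_bound_ge0 D)) gap_xmin.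
by rewrite pmulr_lgt0 ?xmin_gt0.
Qed.

Lemma bomp_margin um : xmin <= um ->
  d%:R * mu * (k%:R * um) + kappa * eps
    < (1 - (d - 1)%N%:R * nu) * um - (d%:R * mu * ((k%:R - 1) * um) + kappa * eps).
Proof.
move=> xmin_um; rewrite -subr_gt0.
have -> : (1 - (d - 1)%N%:R * nu) * um - (d%:R * mu * ((k%:R - 1) * um) + kappa * eps)
    - (d%:R * mu * (k%:R * um) + kappa * eps) = gap * um - 2 * eps * kappa.
  have k2_gt0 : (0 < 2 * k)%N by rewrite muln_gt0 k_gt0.
  by rewrite /gap (natrB _ k2_gt0) natrM; ring.
by rewrite subr_gt0; apply: lt_le_trans gap_xmin (ler_wpM2l (ltW gap_gt0) xmin_um).
Qed.

Lemma bomp_selects_fresh l : (l < k)%N -> chosen sel l \subset S ->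
  ~~ (S \subset chosen sel l) -> sel l \in S /\ sel l \notin chosen sel l.
Proof.
move=> lk TS /subsetPn [j0 j0S j0T].
set u := bsub x (xs l).
have xsT := bomp_supp run (ltnW lk).
have u_supp : bsupp u \subset S := bsupp_subB (subxx S) (subset_trans xsT TS).
have resE : y - bmul D (xs l) = bmul D u + w by rewrite y_def bmulB addrAC.
have [i0 i0S i0_maxS] := exists_argmax (f := fun j => norm2 (u j)) j0S
  (fun j => ger0_real (norm2_ge0 _)).
have i0_max j : norm2 (u j) <= norm2 (u i0).
  have [/i0_maxS //|jS] := boolP (j \in S).
  by rewrite (subset_bsuppP _ _ u_supp) ?norm2_0 ?norm2_ge0.
have xmin_um : xmin <= norm2 (u i0).
  (* [j0] is not chosen yet, so [u j0 = x j0]. *)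
  apply: le_trans (xmin_def.2 j0 j0S) _.
  by rewrite -[x j0]subr0 -((subset_bsuppP _ _ xsT) j0 j0T); apply: i0_max.
have off := corr_off_support d_gt0 unit_cols coh sparse u_supp noise i0_max.
have peak := corr_at_max d_gt0 unit_cols coh sparse u_supp noise i0_max
  (lt_le_trans xmin_gt0 xmin_um).
have greedy := bomp_greedy run i0 lk; rewrite resE in greedy.
have margin := bomp_margin xmin_um.
split.
  apply/negPn/negP => /off sel_le.
  by have := lt_le_trans margin (le_trans peak (le_trans greedy sel_le)); rewrite ltxx.
apply/negP => /(bomp_corr_chosen run (ltnW lk)); rewrite resE => sel0.
rewrite sel0 norm2_0 in greedy.
have bound_ge0 : 0 <= d%:R * mu * (k%:R * norm2 (u i0)) + kappa * eps.
  by rewrite addr_ge0 ?(mulr_ge0 cmu_ge0) ?mulr_ge0 ?norm2_ge0 ?(sqrt_gram_bound_ge0 D).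
by have := le_lt_trans bound_ge0 (lt_le_trans margin (le_trans peak greedy)); rewrite ltxx.
Qed.

Lemma bomp_covers_or_fresh l : (l <= k)%N ->
  S \subset chosen sel l \/ (chosen sel l \subset S /\ #|chosen sel l| = l).
Proof.
elim: l => [_|l IH lk]; first by right; rewrite chosen0 sub0set cards0.
have [ST|[TS cardT]] := IH (ltnW lk).
  by left; apply: subset_trans ST (chosen_subS _ _).
have [ST|/(bomp_selects_fresh lk TS)[selS selT]] := boolP (S \subset chosen sel l).
  by left; apply: subset_trans ST (chosen_subS _ _).
by right; rewrite chosenS subUset sub1set selS TS cardsU1 selT cardT.
Qed.

Lemma bomp_recovers_support : S \subset chosen sel k.
Proof.
have [//|[TS cardT]] := bomp_covers_or_fresh (leqnn k).
suff -> : S = chosen sel k by [].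
by apply/eqP; rewrite eq_sym eqEcard TS cardT.
Qed.

Lemma bomp_error_bound : bnorm2sq (bsub (xs k) x) <=
  eps ^+ 2 / (1 - (d - 1)%N%:R * nu - (k - 1)%N%:R * d%:R * mu).
Proof.
set e := bsub (xs k) x.
have e_supp : bsupp e \subset chosen sel k :=
  bsupp_subB (bomp_supp run (leqnn k)) bomp_recovers_support.
have orth : dot (bmul D e) (y - bmul D (xs k)) = 0.
  have lk : (k.-1 < k)%N by rewrite ltn_predL k_gt0.
  by have := bomp_residual_orth run (e := e) lk; rewrite (prednK k_gt0); apply.
have wE : w = bmul D e + (y - bmul D (xs k)).
  by rewrite bmulB y_def addrC addrA subrK addrAC subrr add0r.
have De_le : norm2sq (bmul D e) <= eps ^+ 2.
  apply: (@le_trans _ _ (norm2sq w)); first by rewrite wE norm2sqD_orth // lerDl norm2sq_ge0.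
  by rewrite -norm2_sqr ler_sqr ?nnegrE ?norm2_ge0.
have lam_gt0 : 0 < 1 - (d - 1)%N%:R * nu - (k - 1)%N%:R * d%:R * mu.
  rewrite -mulrA; apply: lt_le_trans gap_gt0 _; rewrite lerB // ler_wpM2r // ler_nat.
  by rewrite leq_sub2r // mul2n -addnn leq_addl.
rewrite ler_pdivlMr // mulrC -mulrA (natrB _ k_gt0); apply: le_trans De_le.
exact: (block_sparse_norm2sq_ge d_gt0 unit_cols coh (card_chosen sel k) e_supp).
Qed.

End BOMPRecovery.

Theorem theorem2 (C : numClosedFieldType) (L M d k : nat)
  (D : bdict C L M d) (x : bvec C M d) (w y : 'cV[C]_L)
  (eps mu xmin : C)
  (hd : (0 < d)%N)
  (hL : (L < M * d)%N)
  (hcols : forall (l : 'I_M) (j : 'I_d), norm2 (col j (D l)) = 1)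
  (hrank : forall I : {set 'I_M}, (#|I| <= k)%N ->
     forall z : bvec C M d, bsupp z \subset I -> bmul D z = 0 ->
     forall i, z i = 0)
  (hsparse : (#|bsupp x| <= k)%N)
  (hx0 : exists i, x i != 0)
  (hy : y = bmul D x + w)
  (heps : 0 < eps)
  (hw : norm2 w <= eps)
  (hmu : is_block_coherence D mu)
  (hxmin : is_min_block_norm x xmin)
  (hcond : (1 - (d - 1)%N%:R * subcoherence D) * xmin >
           2 * eps * sqrtC (1 + (d - 1)%N%:R * subcoherence D)
           + (2 * k - 1)%N%:R * d%:R * mu * xmin) :
  forall (sel : nat -> 'I_M) (xs : nat -> bvec C M d),
    BOMP_run D y k sel xs ->
    bsupp x \subset chosen sel k /\
    bnorm2sq (bsub (xs k) x) <=
      eps ^+ 2 / (1 - (d - 1)%N%:R * subcoherence D - (k - 1)%N%:R * d%:R * mu).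
Proof.
move=> sel xs run; split.
  exact: (bomp_recovers_support hd hcols hsparse hx0 hy hw hmu hxmin hcond run).
exact: (bomp_error_bound hd hcols hsparse hx0 hy hw hmu hxmin hcond run).
Qed.
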